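(* Let $G$ be a locally compact abelian group and let $\mu\in M(G)$ be a real-valued (signed) measure that is antisymmetric, i.e. $\mu(-A)=-\mu(A)$ for every Borel set $A\subset G$. Let $\mu=\mu^+-\mu^-$ be its Jordan decomposition and let $A^+,A^-$ be a Hahn decomposition for $\mu$. Set $V=A^+\cap(-A^-)$. Then $V\cap(-V)=\emptyset$; for every Borel set $E\subset G$, $$\mu^+(E)=\mu(E\cap A^+)=\mu(E\cap V),\qquad \mu^-(E)=-\mu(E\cap A^-)=-\mu(E\cap(-V));$$ and $$\mu^+(V)=\|\mu^+\|=\|\mu^-\|=\mu^-(-V)=\tfrac12\|\mu\|.$$
   Context: $M(G)$ is the space of bounded regular complex Borel measures on $G$ with total variation norm $\|\cdot\|$. For a Borel set $A$, $-A=\{x\in G:-x\in A\}$. The Jordan decomposition of a signed measure $\mu$ is the unique representation $\mu=\mu^+-\mu^-$ with $\mu^+,\mu^-$ mutually singular nonnegative measures in $M(G)$; a Hahn decomposition is a pair of disjoint Borel sets $A^+,A^-$ with $A^+\cup A^-=G$ such that $\mu^+(A^-)=\mu^-(A^+)=0$, equivalently $A^+$ is a positive set and $A^-$ a negative set for $\mu$, and then $\mu^+(E)=\mu(E\cap A^+)$, $\mu^-(E)=-\mu(E\cap A^-)$. *)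

From HB Require Import structures.
From mathcomp Require Import all_boot all_order all_algebra.
From mathcomp Require Import all_classical all_reals all_analysis.
Set Implicit Arguments. Unset Strict Implicit. Unset Printing Implicit Defensive.
Import Order.TTheory GRing.Theory Num.Theory.
Local Open Scope classical_set_scope.
Local Open Scope ring_scope.

Section BorelSpace.
Variable G : topologicalZmodType.
Definition Borel : Type := G.
HB.instance Definition _ := Choice.on Borel.
HB.instance Definition _ := isPointed.Build Borel 0.
Lemma Borel_sigma_algebraC (A : set Borel) :
  <<s @open G >> A -> <<s @open G >> (~` A).
Proof. by move=> sGA; rewrite -setTD; exact: sigma_algebraCD. Qed.
HB.instance Definition _ := @isMeasurable.Build (sigma_display (@open G))
  Borel <<s @open G >> (@sigma_algebra0 _ setT (@open G)) Borel_sigma_algebraC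
  (@sigma_algebra_bigcup _ setT (@open G)).
End BorelSpace.

Definition negset (G : zmodType) (A : set G) : set G := [set x | A (- x)].

Definition total_variation d (T : measurableType d) (R : realType)
    (nu : set T -> \bar R) (E : set T) : \bar R :=
  ereal_sup [set x | exists (n : nat) (F : 'I_n -> set T),
    [/\ (forall i, measurable (F i)), trivIset setT F,
        \bigcup_(i in setT) F i = E & x = (\sum_(i < n) `|nu (F i)|)%E]].

Definition tv_norm d (T : measurableType d) (R : realType)
    (nu : set T -> \bar R) : \bar R := total_variation nu setT.

Definition regular_charge (G : topologicalZmodType) (R : realType)
    (nu : set (Borel G) -> \bar R) : Prop :=
  forall E : set (Borel G), measurable E ->
    total_variation nu E =
      ereal_inf [set total_variation nu U | U in [set U : set G | open U /\ E `<=` U]]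
    /\ total_variation nu E =
      ereal_sup [set total_variation nu K | K in [set K : set G | compact K /\ K `<=` E]].

Definition jordan_decomposition d (T : measurableType d) (R : realType)
    (nu : {charge set T -> \bar R})
    (nup nun : {finite_measure set T -> \bar R}) : Prop :=
  (forall A, measurable A -> nu A = (nup A - nun A)%E) /\
  exists S : set T, [/\ measurable S, nup (~` S) = 0%E & nun S = 0%E].

From HB Require Import structures.
From mathcomp Require Import all_boot all_order all_algebra.
From mathcomp Require Import all_classical all_reals all_analysis.
From mathcomp Require Import lra.
Set Implicit Arguments. Unset Strict Implicit. Unset Printing Implicit Defensive.
Import Order.TTheory GRing.Theory Num.Theory.
Local Open Scope classical_set_scope.
Local Open Scope ring_scope.
Local Open Scope ereal_scope.

(* Mutual singularity forces mu^+ to vanish on measurable subsets of the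
   negative set A^- and mu^- on those of A^+, so that mu^+ = mu( . & A^+) and
   mu^- = - mu( . & A^-); the partition {A^+, A^-} then attains the total
   variation, ||mu|| = mu^+(G) + mu^-(G).  Antisymmetry makes mu vanish on
   every measurable F inside A^+ & -A^+: both mu F and mu (-F) = - mu F are
   nonnegative.  Removing this null part turns A^+ into
   A^+ \ -A^+ = A^+ & -A^- = V, and likewise A^- into -V.  Hence all four
   quantities equal mu V, and ||mu|| = 2 mu V. *)

Lemma bigcup_ordT T n (F : 'I_n -> set T) :
  \bigcup_(i in setT) F i = \big[setU/set0]_(i < n) F i.
Proof.
rewrite -bigcup_seq; congr (\bigcup_(i in _) _).
by apply/seteqP; split=> i //= _; rewrite mem_index_enum.
Qed.

Lemma hahn_decompositionC d (T : measurableType d) (R : realType)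
    (nu : {charge set T -> \bar R}) P N :
  hahn_decomposition nu P N -> N = ~` P.
Proof.
case=> _ _ PNT PN0; apply/seteqP; split=> x.
  by move=> Nx Px; have : (P `&` N) x by []; rewrite PN0.
move=> nPx; have : (P `|` N) x by rewrite PNT.
by case.
Qed.

Section total_variation_norm.
Context d (T : measurableType d) (R : realType).

Lemma measure_partition_setT (m : {measure set T -> \bar R}) n
    (F : 'I_n -> set T) :
  (forall i, measurable (F i)) -> trivIset setT F ->
  \bigcup_(i in setT) F i = setT -> \sum_(i < n) m (F i) = m setT.
Proof.
by rewrite bigcup_ordT => mF tF UF; rewrite -measure_semi_additive_ord ?UF.
Qed.

Lemma tv_norm_le (nu : set T -> \bar R) M :
  (forall n (F : 'I_n -> set T), (forall i, measurable (F i)) ->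
     trivIset setT F -> \bigcup_(i in setT) F i = setT ->
     \sum_(i < n) `|nu (F i)| <= M) ->
  tv_norm nu <= M.
Proof.
by move=> ub; apply: ge_ereal_sup => _ [n [F [mF tF UF ->]]]; exact: ub.
Qed.

Lemma le_tv_norm2 (nu : set T -> \bar R) P N :
  measurable P -> measurable N -> P `|` N = setT -> P `&` N = set0 ->
  `|nu P| + `|nu N| <= tv_norm nu.
Proof.
move=> mP mN PNT PN0; apply: ereal_sup_ubound.
exists 2%N, (fun i : 'I_2 => if i == ord0 then P else N); split.
- by move=> i; case: ifP.
- move=> i j _ _ [x]; case: ifPn => [/eqP->|i0]; case: ifPn => [/eqP->|j0] //.
  + by move=> PNx; have : (P `&` N) x by []; rewrite PN0.
  + by move=> [Nx Px]; have : (P `&` N) x by []; rewrite PN0.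
  + by move=> _; apply/val_inj; case: i j i0 j0 => [[|[|]]] // ? [[|[|]]].
- apply/seteqP; split=> x // _.
  have : (P `|` N) x by rewrite PNT.
  by case=> ?; [exists ord0|exists ord_max].
- by rewrite !big_ord_recl big_ord0 /= adde0.
Qed.

Lemma tv_norm_measure (m : {measure set T -> \bar R}) : tv_norm m = m setT.
Proof.
apply/le_anti/andP; split.
  apply: tv_norm_le => n F mF tF UF.
  rewrite -(measure_partition_setT m mF tF UF).
  by apply: lee_sum => i _; rewrite gee0_abs.
have := le_tv_norm2 m measurableT measurable0 (setU0 _) (setI0 _).
by rewrite measure0 abse0 adde0 gee0_abs.
Qed.

Lemma measure_le_singular_eq0 (m1 m2 : {measure set T -> \bar R}) S X :
  measurable S -> measurable X -> m1 (~` S) = 0 -> m2 S = 0 ->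
  (forall Y, measurable Y -> Y `<=` X -> m1 Y <= m2 Y) -> m1 X = 0.
Proof.
move=> mS mX m1S0 m2S0 m12.
have mXS : measurable (X `&` S) by exact: measurableI.
have m1XDS : m1 (X `\` S) = 0.
  apply: subset_measure0 m1S0; [exact: measurableD|exact: measurableC|].
  by move=> x [].
have m2XS : m2 (X `&` S) = 0 by apply: subset_measure0 m2S0 => //; exact: subIsetr.
rewrite (measureDI m1 mX mS) [X in X + _]m1XDS add0e.
apply/eqP; rewrite -measure_le0 -m2XS.
exact: m12 mXS (@subIsetl _ _ _).
Qed.

End total_variation_norm.

Section jordan_hahn.
Context d (T : measurableType d) (R : realType).
Variable nu : {charge set T -> \bar R}.
Variables (nup nun : {finite_measure set T -> \bar R}).
Hypothesis nuJ : jordan_decomposition nu nup nun.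
Variables P N : set T.
Hypothesis nuPN : hahn_decomposition nu P N.

Let mP : measurable P. Proof. by case: nuPN => -[]. Qed.

Let NC : N = ~` P. Proof. exact: hahn_decompositionC nuPN. Qed.

Let nuE A : measurable A -> nu A = nup A - nun A.
Proof. by case: nuJ => + _; apply. Qed.

Let jordan_pos_null X : measurable X -> X `<=` N -> nup X = 0.
Proof.
move=> mX XN; have [_ [S [mS nupS nunS]]] := nuJ.
apply: (measure_le_singular_eq0 mS mX nupS nunS) => Y mY YX.
rewrite -sube_le0 -nuE //.
by case: nuPN => _ [_ +] _ _; apply=> //; exact: subset_trans XN.
Qed.

Let jordan_neg_null X : measurable X -> X `<=` P -> nun X = 0.
Proof.
move=> mX XP; have [_ [S [mS nupS nunS]]] := nuJ.
apply: (measure_le_singular_eq0 (measurableC mS) mX _ nupS) => [|Y mY YX].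
  by rewrite setCK.
rewrite -sube_ge0 ?fin_num_measure // -nuE //.
by case: nuPN => [[_ +]] _ _ _; apply=> //; exact: subset_trans XP.
Qed.

Lemma jordan_decomposition_posE E : measurable E -> nup E = nu (E `&` P).
Proof.
move=> mE; have mEP : measurable (E `&` P) by exact: measurableI.
rewrite nuE // (jordan_neg_null mEP) ?sube0; last exact: subIsetr.
rewrite (measureDI nup mE mP).
rewrite [X in X + _](jordan_pos_null (measurableD mE mP)) ?add0e //.
by rewrite NC => x [].
Qed.

Lemma jordan_decomposition_negE E : measurable E -> nun E = - nu (E `&` N).
Proof.
move=> mE; have mEN : measurable (E `&` N) by rewrite NC; exact: measurableD.
rewrite nuE // (jordan_pos_null mEN) ?sub0e ?oppeK; last exact: subIsetr.
rewrite (measureDI nun mE mP).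
rewrite [X in _ + X](jordan_neg_null (measurableI _ _ mE mP)).
  by rewrite adde0 NC.
exact: subIsetr.
Qed.

Lemma tv_norm_jordan : tv_norm nu = nup setT + nun setT.
Proof.
have [[_ Ppos] [mN Nneg] PNT PN0] := nuPN.
apply/le_anti/andP; split.
  apply: tv_norm_le => n F mF tF UF.
  rewrite -(measure_partition_setT nup mF tF UF).
  rewrite -(measure_partition_setT nun mF tF UF) -big_split /=.
  apply: lee_sum => i _; rewrite nuE //.
  by apply: le_trans (lee_abs_sub _ _) _; rewrite !gee0_abs.
rewrite jordan_decomposition_posE // jordan_decomposition_negE // !setTI.
by rewrite -(gee0_abs (Ppos _ _ _)) // -(lee0_abs (Nneg _ _ _)) // le_tv_norm2.
Qed.

End jordan_hahn.

Lemma charge_setI_setD_null d (T : measurableType d) (R : realType)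
    (nu : {charge set T -> \bar R}) (Q B E : set T) :
  measurable Q -> measurable B -> measurable E ->
  (forall F, measurable F -> F `<=` Q `&` B -> nu F = 0) ->
  nu (E `&` Q) = nu (E `&` (Q `\` B)).
Proof.
move=> mQ mB mE nuQB0; have mEQ := measurableI _ _ mE mQ.
rewrite (chargeDI nu mEQ mB) [X in _ + X]nuQB0 ?adde0 ?setIDA //.
  exact: measurableI.
by move=> x [[_ ?] ?].
Qed.

Section reflection.
Variable G : topologicalZmodType.

Lemma negsetK (A : set G) : negset (negset A) = A.
Proof. by apply/seteqP; split=> x /=; rewrite /negset /= opprK. Qed.

Lemma negsetC (A : set G) : negset (~` A) = ~` negset A.
Proof. by []. Qed.

Lemma measurable_negset (A : set (Borel G)) :
  measurable A -> measurable (negset A : set (Borel G)).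
Proof.
have mopp : @measurable_fun _ _ (Borel G) (Borel G) setT (fun x : G => - x)%R.
  apply: (@measurability _ _ (Borel G) (Borel G) _ _ (@open G)) => // _ [U oU <-].
  apply: sub_sigma_algebra; rewrite setTI.
  exact: (proj1 (continuousP _) (@opp_continuous G)).
by move=> mA; rewrite -[negset A]setTI; exact: mopp.
Qed.

End reflection.

Section antisymmetric_charge.
Context (G : topologicalZmodType) (R : realType).
Variable mu : {charge set Borel G -> \bar R}.
Hypothesis mu_anti :
  forall A : set (Borel G), measurable A -> mu (negset A) = - mu A.

Lemma anti_charge_positive_set_eq0 (P F : set (Borel G)) :
  positive_set mu P -> measurable F -> F `<=` P `&` negset P -> mu F = 0.
Proof.
move=> [_ Ppos] mF FP; apply/le_anti/andP; split.
  rewrite -oppe_ge0 -mu_anti //; apply: Ppos; first exact: measurable_negset.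
  by move=> x /FP[_] /=; rewrite /negset /= opprK.
by apply: Ppos => // x /FP[].
Qed.

Lemma anti_charge_negative_set_eq0 (N F : set (Borel G)) :
  negative_set mu N -> measurable F -> F `<=` N `&` negset N -> mu F = 0.
Proof.
move=> [_ Nneg] mF FN; apply/le_anti/andP; split.
  by apply: Nneg => // x /FN[].
rewrite -oppe_le0 -mu_anti //; apply: Nneg; first exact: measurable_negset.
by move=> x /FN[_] /=; rewrite /negset /= opprK.
Qed.

Variables P N : set (Borel G).
Hypothesis muPN : hahn_decomposition mu P N.

Let mP : measurable P. Proof. by case: muPN => -[]. Qed.
Let mN : measurable N. Proof. by case: muPN => _ []. Qed.
Let NC : N = ~` P. Proof. exact: hahn_decompositionC muPN. Qed.

Lemma hahn_setI_negset_disjoint :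
  (P `&` negset N) `&` negset (P `&` negset N) = set0.
Proof.
apply/seteqP; split=> // x [[Px _]] [_]; rewrite /negset /= opprK => Nx.
by case: muPN => _ _ _ PN0; have : (P `&` N) x by []; rewrite PN0.
Qed.

Lemma charge_setI_hahn_pos E : measurable E ->
  mu (E `&` P) = mu (E `&` (P `&` negset N)).
Proof.
move=> mE; rewrite NC negsetC -setDE.
apply: charge_setI_setD_null => //; first exact: measurable_negset.
by move=> F mF FP; apply: anti_charge_positive_set_eq0 mF FP; case: muPN.
Qed.

Lemma charge_setI_hahn_neg E : measurable E ->
  mu (E `&` N) = mu (E `&` negset (P `&` negset N)).
Proof.
move=> mE; have -> : negset (P `&` negset N) = N `\` negset N.
  change (negset P `&` negset (negset N) = N `&` ~` negset N).
  by rewrite negsetK setIC; congr (_ `&` _); rewrite NC negsetC setCK.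
apply: charge_setI_setD_null => //; first exact: measurable_negset.
by move=> F mF FN; apply: anti_charge_negative_set_eq0 mF FN; case: muPN.
Qed.

End antisymmetric_charge.

Theorem lemma1 (R : realType) (G : topologicalZmodType)
  (hG : hausdorff_space G) (lcG : locally_compact [set: G])
  (mu : {charge set Borel G -> \bar R}) (mu_reg : regular_charge mu)
  (mu_anti : forall A : set (Borel G), measurable A -> mu (negset A) = - mu A)
  (mup mun : {finite_measure set Borel G -> \bar R})
  (Hjordan : jordan_decomposition mu mup mun)
  (Ap An : set (Borel G)) (Hhahn : hahn_decomposition mu Ap An) :
  let V := Ap `&` negset An in
  [/\ V `&` negset V = set0,
      (forall E : set (Borel G), measurable E ->
        [/\ mup E = mu (E `&` Ap), mu (E `&` Ap) = mu (E `&` V),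
            mun E = - mu (E `&` An) & - mu (E `&` An) = - mu (E `&` negset V)])
    & [/\ mup V = tv_norm mup, tv_norm mup = tv_norm mun,
          tv_norm mun = mun (negset V)
        & mun (negset V) = (2^-1)%:E * tv_norm mu]].
Proof.
move=> V; have [[mAp _] [mAn _] _ _] := Hhahn.
have mV : measurable V by apply: measurableI => //; exact: measurable_negset.
have mnV : measurable (negset V : set (Borel G)) by exact: measurable_negset.
have posE := jordan_decomposition_posE Hjordan Hhahn.
have negE := jordan_decomposition_negE Hjordan Hhahn.
have posV := charge_setI_hahn_pos mu_anti Hhahn.
have negV := charge_setI_hahn_neg mu_anti Hhahn.
have mupE E : measurable E -> mup E = mu (E `&` V).
  by move=> mE; rewrite posE ?posV.
have munE E : measurable E -> mun E = - mu (E `&` negset V).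
  by move=> mE; rewrite negE ?negV.
have mupV : mup V = mu V by rewrite mupE // setIid.
have mupT : mup setT = mu V by rewrite mupE // setTI.
have munT : mun setT = mu V by rewrite munE // setTI mu_anti // oppeK.
have tv_mup : tv_norm mup = mu V by rewrite tv_norm_measure; exact: mupT.
have tv_mun : tv_norm mun = mu V by rewrite tv_norm_measure; exact: munT.
have munV : mun (negset V) = mu V by rewrite munE // setIid mu_anti // oppeK.
split.
- exact: hahn_setI_negset_disjoint Hhahn.
- by move=> E mE; rewrite posE // negE // posV // negV.
rewrite tv_mup tv_mun (tv_norm_jordan Hjordan Hhahn) mupV mupT munT munV.
split => //; have : mu V \is a fin_num by exact: fin_num_measure.
by case: (mu V) => // r _; rewrite -EFinM; congr EFin; lra.
Qed.
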